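(* Let $\Omega=[-1,1]$, let $\Pi_3(\mathbb{R}^1)$ be the space of real polynomials in one variable of degree at most $3$, and let $T:\mathbb{R}\to\mathbb{R}^3$, $T(x)=(x,x^2,x^3)$. Let $P:C[-1,1]\to\Pi_3(\mathbb{R}^1)$ be the interpolation projector with the regular nodes $-1,-\frac13,\frac13,1$, and let $S\subset\mathbb{R}^3$ be the tetrahedron with vertices $T(-1),T(-\frac13),T(\frac13),T(1)$. Then $$\xi(T(\Omega);S)=\frac{4}{2}\left(\|P\|_\Omega-1\right)+1=2\|P\|_\Omega-1.$$
   Context: For a nondegenerate simplex $S\subset\mathbb{R}^m$ and $\sigma>0$, $\sigma S$ denotes the image of $S$ under the homothety with center at the center of gravity of $S$ and ratio $\sigma$. For a closed bounded set $K\subset\mathbb{R}^m$, $\xi(K;S):=\min\{\sigma\ge 1: K\subset\sigma S\}$. The interpolation projector $P$ with distinct nodes $x^{(1)},\dots,x^{(4)}\in\Omega$ onto $\Pi_3(\mathbb{R}^1)$ is defined by $Pf\in\Pi_3(\mathbb{R}^1)$, $Pf(x^{(j)})=f(x^{(j)})$ for all $j$; $\|P\|_\Omega$ is its operator norm as a map $C(\Omega)\to C(\Omega)$ with the uniform norm. *)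

From HB Require Import structures.
From mathcomp Require Import all_boot all_order all_algebra.
From mathcomp Require Import all_classical all_reals all_analysis.
Set Implicit Arguments. Unset Strict Implicit. Unset Printing Implicit Defensive.
Import Order.TTheory GRing.Theory Num.Theory numFieldNormedType.Exports.
Local Open Scope classical_set_scope.
Local Open Scope ring_scope.

Section Defs.
Variable R : realType.

Definition simplex (m : nat) (v : 'I_m.+1 -> 'rV[R]_m) : set 'rV[R]_m :=
  [set y | exists lam : 'I_m.+1 -> R,
      (forall i, 0 <= lam i) /\ \sum_i lam i = 1 /\ y = \sum_i lam i *: v i].

Definition simplex_center (m : nat) (v : 'I_m.+1 -> 'rV[R]_m) : 'rV[R]_m :=
  (m.+1%:R)^-1 *: \sum_i v i.

Definition scaled_simplex (m : nat) (sigma : R) (v : 'I_m.+1 -> 'rV[R]_m)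
  : set 'rV[R]_m :=
  [set simplex_center v + sigma *: (y - simplex_center v) | y in simplex v].

Definition xi (m : nat) (K : set 'rV[R]_m) (v : 'I_m.+1 -> 'rV[R]_m) : R :=
  inf [set sigma : R | 1 <= sigma /\ K `<=` scaled_simplex sigma v].

Definition interp_proj_norm (n : nat) (Omega : set R) (x : 'I_n.+1 -> R) : R :=
  sup [set r : R | exists (f : R -> R) (p : {poly R}) (t : R),
            {within Omega, continuous f} /\
            (forall s, Omega s -> `|f s| <= 1) /\
            (size p <= n.+1)%N /\
            (forall j, p.[x j] = f (x j)) /\
            Omega t /\ r = `|p.[t]|].

Definition Tcurve (x : R) : 'rV[R]_3 := \row_(i < 3) x ^+ i.+1.

Definition reg_nodes (j : 'I_4) : R := (j%:R * 2) / 3 - 1.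

End Defs.

(* For pairwise distinct nodes x_0, ..., x_3 the Lagrange basis l_j reproduces
   the monomials of degree <= 3, so T(t) = sum_j l_j(t) T(x_j) with
   sum_j l_j(t) = 1, and these are the only affine coordinates of T(t) in S.
   Since sigma S is the set of points whose barycentric coordinates are all
   >= (1 - sigma)/4, xi(T(Omega); S) = 1 - 4 m, where m is the minimum of all
   l_j on Omega.  The norm of P is the maximum of the Lebesgue function
   sum_j |l_j(t)| = 1 - 2 sum_j min(l_j(t), 0).  For the regular nodes the
   negative part never exceeds -m, and it equals -m at the minimiser t_min of
   l_1, where l_1 is the only negative l_j; a continuous function equal to the
   sign of l_j(t_min) at x_j realises this value.  Hence ||P|| = 1 - 2 m. *)

From HB Require Import structures.
From mathcomp Require Import all_boot all_order all_algebra.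
From mathcomp Require Import all_classical all_reals all_analysis.
From mathcomp Require Import ring lra.

Set Implicit Arguments.
Unset Strict Implicit.
Unset Printing Implicit Defensive.
Import Order.TTheory GRing.Theory Num.Theory numFieldNormedType.Exports.
Local Open Scope classical_set_scope.
Local Open Scope ring_scope.

(* The library notation [x.-lagrange_] takes the size, not the nodes, as [x]. *)
Local Notation lagr x i := (tnth (lagrange _ x) i : {poly _}).

Section LagrangeInterpolation.
Variables (K : fieldType) (n : nat) (x : nat -> K).
Hypothesis x_inj : injective x.

Lemma horner_lagrange (p : {poly K}) t : (size p <= n.+1)%N ->
  p.[t] = \sum_(i < n.+1) p.[x i] * (lagr x i).[t].
Proof.
move=> sp; rewrite [in LHS](lagrange_gen _ x_inj sp) // horner_sum.
by apply: eq_bigr => i _; rewrite hornerM hornerC.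
Qed.

Lemma sum_lagrange t : \sum_(i < n.+1) (lagr x i).[t] = 1.
Proof.
have := horner_lagrange (p := 1) t; rewrite size_poly1 hornerC => /(_ isT) ->.
by apply: eq_bigr => i _; rewrite hornerC mul1r.
Qed.

Lemma lagrange_moment k t : (k <= n)%N ->
  \sum_(i < n.+1) (lagr x i).[t] * x i ^+ k = t ^+ k.
Proof.
move=> kn; have := horner_lagrange (p := 'X^k) t; rewrite size_polyXn hornerXn => /(_ kn) ->.
by apply: eq_bigr => i _; rewrite hornerXn mulrC.
Qed.

Lemma lagrange_coord_unique (mu : 'I_n.+1 -> K) t :
  (forall k, (k <= n)%N -> \sum_i mu i * x i ^+ k = t ^+ k) ->
  forall j, mu j = (lagr x j).[t].
Proof.
move=> hmu j.
have interp (p : {poly K}) : (size p <= n.+1)%N -> \sum_i mu i * p.[x i] = p.[t].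
  move=> sp; rewrite (horner_coef_wide t sp).
  under eq_bigr do rewrite (horner_coef_wide _ sp) big_distrr.
  rewrite exchange_big; apply: eq_bigr => k _ /=.
  have kn : (k <= n)%N by rewrite -ltnS.
  rewrite -(hmu k kn) big_distrr; apply: eq_bigr => i _ /=.
  by rewrite mulrCA.
rewrite -interp ?size_lagrange_ // (bigD1 j) //= lagrange_sample // eqxx mulr1.
rewrite big1 ?addr0 // => i ij.
by rewrite lagrange_sample // eq_sym (negPf ij) mulr0.
Qed.

End LagrangeInterpolation.

Section ScaledSimplex.
Variables (R : realType) (m : nat) (v : 'I_m.+1 -> 'rV[R]_m).

Lemma homothety_comb (sigma : R) (lam : 'I_m.+1 -> R) :
  simplex_center v + sigma *: (\sum_i lam i *: v i - simplex_center v)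
  = \sum_i ((1 - sigma) / m.+1%:R + sigma * lam i) *: v i.
Proof.
have -> : \sum_i ((1 - sigma) / m.+1%:R + sigma * lam i) *: v i
    = ((1 - sigma) / m.+1%:R) *: \sum_i v i + sigma *: \sum_i lam i *: v i.
  by rewrite !scaler_sumr -big_split; apply: eq_bigr => i _; rewrite scalerDl scalerA.
rewrite /simplex_center scalerBr addrCA scalerA addrC; congr (_ + _).
by rewrite -scalerBl mulrBl mul1r.
Qed.

Lemma mem_scaled_simplex (sigma : R) (mu : 'I_m.+1 -> R) :
  0 < sigma -> \sum_i mu i = 1 -> (forall i, (1 - sigma) / m.+1%:R <= mu i) ->
  scaled_simplex sigma v (\sum_i mu i *: v i).
Proof.
move=> s_gt0 mu1 mu_ge.
have nz : (sigma != 0) && (1 + m%:R != 0 :> R) by rewrite gt_eqF //= addrC natr1 pnatr_eq0.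
pose lam i := (mu i - (1 - sigma) / m.+1%:R) / sigma.
exists (\sum_i lam i *: v i).
  exists lam; split; first by move=> i; rewrite divr_ge0 ?subr_ge0 ?mu_ge ?ltW.
  split=> //; rewrite -mulr_suml big_split /= mu1 sumr_const card_ord -mulr_natr.
  by field.
apply: etrans (homothety_comb sigma lam) _; apply: eq_bigr => i _.
by congr (_ *: _); rewrite /lam; field.
Qed.

Lemma scaled_simplex_coords (sigma : R) y : 0 <= sigma ->
  scaled_simplex sigma v y ->
  exists mu : 'I_m.+1 -> R, [/\ \sum_i mu i = 1,
    forall i, (1 - sigma) / m.+1%:R <= mu i & y = \sum_i mu i *: v i].
Proof.
move=> s_ge0 [_ [lam [lam_ge0 [lam1 ->]]] <-].
exists (fun i => (1 - sigma) / m.+1%:R + sigma * lam i); split.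
- rewrite big_split /= sumr_const card_ord -mulr_sumr lam1 -mulr_natr.
  by field; rewrite addrC natr1 pnatr_eq0.
- by move=> i; rewrite lerDl mulr_ge0.
- exact: homothety_comb.
Qed.

End ScaledSimplex.

Section Extrema.
Variable R : realType.

Lemma inf_eq_min (A : set R) a : A a -> lbound A a -> inf A = a.
Proof.
move=> Aa lbA; apply/eqP; rewrite eq_le lb_le_inf ?andbT //; last by exists a.
exact: (ge_inf (ex_intro _ a lbA)).
Qed.

Lemma sup_eq_max (A : set R) a : A a -> ubound A a -> sup A = a.
Proof.
move=> Aa ubA; apply/eqP; rewrite eq_le ge_sup //=; last by exists a.
exact: (ub_le_sup (ex_intro _ a ubA)).
Qed.

End Extrema.

Section MomentCurve.
Variable R : realType.

Lemma Tcurve_combP (x mu : 'I_4 -> R) t :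
  (\sum_i mu i = 1 /\ \sum_i mu i *: Tcurve (x i) = Tcurve t) <->
  (forall k, (k <= 3)%N -> \sum_i mu i * x i ^+ k = t ^+ k).
Proof.
have entry (k : 'I_3) :
    (\sum_i mu i *: Tcurve (x i)) ord0 k = \sum_i mu i * x i ^+ k.+1.
  by rewrite summxE; apply: eq_bigr => i _; rewrite !mxE.
split=> [[mu1 /rowP comb] [|k] k3|moments].
- by rewrite expr0 -mu1; apply: eq_bigr => i _; rewrite expr0 mulr1.
- by have := comb (Ordinal k3); rewrite entry mxE.
split; first by rewrite -(expr0 t) -moments //; apply: eq_bigr => i _; rewrite expr0 mulr1.
by apply/rowP => k; rewrite entry mxE moments.
Qed.

Lemma xi_moment_curve (x : nat -> R) (Omega : set R) (lmin t0 : R) (j0 : 'I_4) :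
  injective x -> lmin <= 0 ->
  (forall (j : 'I_4) t, Omega t -> lmin <= (lagr x j).[t]) ->
  Omega t0 -> (lagr x j0).[t0] = lmin ->
  xi (@Tcurve R @` Omega) (fun j : 'I_4 => Tcurve (x j)) = 1 - 4 * lmin.
Proof.
move=> x_inj lmin_le0 lagr_ge t0_in lagr_t0.
apply: inf_eq_min.
  split=> [|_ [t t_in <-]]; first lra.
  have [_ <-] := proj2 (Tcurve_combP (fun j => x j) _ t) (fun k => lagrange_moment x_inj t).
  apply: mem_scaled_simplex => [||i]; first lra.
    exact: sum_lagrange.
  have := lagr_ge i t t_in; lra.
move=> sigma [sigma_ge1 /(_ (Tcurve t0) (ex_intro2 _ _ t0 t0_in erefl))].
case/scaled_simplex_coords => [|mu [mu1 mu_ge e]]; first lra.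
have := mu_ge j0; rewrite (lagrange_coord_unique x_inj (t := t0)) ?lagr_t0; first lra.
by apply/Tcurve_combP.
Qed.

End MomentCurve.

Section InterpolationNorm.
Variables (R : realType) (n : nat) (x : nat -> R).
Hypothesis x_inj : injective x.

Lemma interp_proj_norm_eq (Omega : set R) (L : R) (f : R -> R) (t0 : R) :
  (forall j : 'I_n.+1, Omega (x j)) ->
  (forall t, Omega t -> \sum_(j < n.+1) `|(lagr x j).[t]| <= L) ->
  {within Omega, continuous f} -> (forall s, Omega s -> `|f s| <= 1) ->
  Omega t0 -> \sum_(j < n.+1) f (x j) * (lagr x j).[t0] = L ->
  interp_proj_norm Omega (fun j : 'I_n.+1 => x j) = L.
Proof.
move=> nodes_in lebesgue_le f_cont f_le1 t0_in f_t0.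
have L_ge0 : 0 <= L by apply: le_trans (lebesgue_le t0 t0_in); exact: sumr_ge0.
apply: sup_eq_max.
  pose p := \sum_(j < n.+1) f (x j) *: lagr x j.
  have p_size : (size p <= n.+1)%N.
    rewrite (leq_trans (size_sum _ _ _)) //; apply/bigmax_leqP => j _.
    by rewrite (leq_trans (size_scale_leq _ _)) // size_lagrange_.
  have p_nodes (k : 'I_n.+1) : p.[x k] = f (x k).
    rewrite horner_sum (bigD1 k) //= hornerZ lagrange_sample // eqxx mulr1.
    rewrite big1 ?addr0 // => j jk.
    by rewrite hornerZ lagrange_sample // (negPf jk) mulr0.
  have p_t0 : p.[t0] = L.
    by rewrite -f_t0 horner_sum; apply: eq_bigr => j _; rewrite hornerZ.
  by exists f, p, t0; rewrite p_t0 ger0_norm.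
move=> _ [g [p [t [_ [g_le1 [sp [interp [t_in ->]]]]]]]].
rewrite (horner_lagrange x_inj t sp); apply: le_trans (lebesgue_le t t_in).
apply: le_trans (ler_norm_sum _ _ _) _; apply: ler_sum => j _.
by rewrite normrM interp ler_piMl // g_le1.
Qed.

End InterpolationNorm.

Section RegularNodes.
Variable R : realType.

Definition node (k : nat) : R := k%:R * 2 / 3 - 1.

Lemma node_inj : injective node.
Proof. by move=> k l; rewrite /node => e; apply/eqP; rewrite -(eqr_nat R); apply/eqP; lra. Qed.

Lemma node_in k : (k <= 3)%N -> -1 <= node k <= 1.
Proof.
rewrite -(ler_nat R) /node => k3; have := ler0n R k.
by move=> ?; apply/andP; split; lra.
Qed.

Definition reg_lagrange (j : nat) (t : R) : R :=
  match j with
  | 0 => - (9/16) * ((t + 1/3) * (t - 1/3) * (t - 1))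
  | 1 => 27/16 * ((t + 1) * (t - 1/3) * (t - 1))
  | 2 => - (27/16) * ((t + 1) * (t + 1/3) * (t - 1))
  | _ => 9/16 * ((t + 1) * (t + 1/3) * (t - 1/3))
  end.
Arguments reg_lagrange : simpl never.

Lemma lagrange_nodeE (j : 'I_4) t : (lagr node j).[t] = reg_lagrange j t.
Proof.
symmetry; apply: (lagrange_coord_unique node_inj (mu := fun j : 'I_4 => reg_lagrange j t)).
by case=> [|[|[|[|k]]]] // _; rewrite !big_ord_recr big_ord0 /= /reg_lagrange /node /=; field.
Qed.

Lemma reg_lagrange_sym j t : (j <= 3)%N -> reg_lagrange j (- t) = reg_lagrange (3 - j) t.
Proof. by case: j => [|[|[|[|j]]]] // _; rewrite /reg_lagrange /=; field. Qed.

(* The root in [-1, 1] of the derivative of l_1, which is a multiple of 9t^2 - 2t - 3. *)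
Definition t_min : R := (1 + 2 * Num.sqrt 7) / 9.

Definition lagrange_min : R := reg_lagrange 1 t_min.

Lemma t_min_root : 9 * t_min ^+ 2 - 2 * t_min - 3 = 0.
Proof.
have sqrt7 : Num.sqrt (7 : R) ^+ 2 = 7 by rewrite sqr_sqrtr // ler0n.
have -> : 9 * t_min ^+ 2 - 2 * t_min - 3 = 4/9 * (Num.sqrt 7 ^+ 2 - 7) by rewrite /t_min; field.
by rewrite sqrt7 subrr mulr0.
Qed.

Lemma t_min_bounds : 2/3 < t_min <= 1.
Proof.
have sqrt7 : Num.sqrt (7 : R) ^+ 2 = 7 by rewrite sqr_sqrtr // ler0n.
have := sqrtr_ge0 (7 : R); rewrite /t_min => ?; apply/andP; split; nra.
Qed.

Lemma lagrange_min_le_reg1 t : -1 <= t -> lagrange_min <= reg_lagrange 1 t.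
Proof.
move=> t_ge; have /andP[t_min_gt t_min_le] := t_min_bounds.
rewrite -subr_ge0; have -> : reg_lagrange 1 t - lagrange_min
    = 27/16 * ((t - t_min) ^+ 2 * (t + 2 * t_min - 1/3)
               + (9 * t_min ^+ 2 - 2 * t_min - 3) * (t - t_min) / 3).
  by rewrite /lagrange_min /reg_lagrange /=; field.
rewrite t_min_root mul0r mul0r addr0 mulr_ge0 // mulr_ge0 ?sqr_ge0 //; lra.
Qed.

Lemma lagrange_min_bound : lagrange_min <= - (3/10).
Proof. by have := lagrange_min_le_reg1 (t := 7/10); rewrite /reg_lagrange /= => /(_ ltac:(lra)); lra. Qed.

Lemma lagrange_min_le_reg j t : -1 <= t <= 1 -> lagrange_min <= reg_lagrange j t.
Proof.
move=> /andP[t_ge t_le]; have := lagrange_min_bound.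
case: j => [|[|[|j]]] min_bound.
- by rewrite /reg_lagrange /=; nra.
- exact: lagrange_min_le_reg1.
- have := lagrange_min_le_reg1 (t := - t); rewrite reg_lagrange_sym // ?subSS ?subn0.
  by move/(_ ltac:(lra)).
- by rewrite /reg_lagrange /=; nra.
Qed.

Lemma sum_reg_lagrange t : \sum_(j < 4) reg_lagrange j t = 1.
Proof. by rewrite !big_ord_recr big_ord0 /= /reg_lagrange /=; field. Qed.

Lemma lebesgue_reg_le t : -1 <= t <= 1 ->
  \sum_(j < 4) `|reg_lagrange j t| <= 1 - 2 * lagrange_min.
Proof.
wlog t_ge0 : t / 0 <= t => [wlog_t t_in|/andP[_ t_le1]].
  have [t_ge0|t_lt0] := leP 0 t; first exact: wlog_t.
  have := wlog_t (- t); rewrite !big_ord_recr !big_ord0 /= !reg_lagrange_sym // ?subSS ?subn0.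
  have t_in' : -1 <= - t <= 1 by move: t_in => /andP[? ?]; apply/andP; split; lra.
  move/(_ ltac:(lra) t_in'); rewrite !add0r; lra.
have mulr3_ge0 (a b c : R) : 0 <= a -> 0 <= b -> 0 <= c -> 0 <= a * b * c.
  by move=> *; rewrite !mulr_ge0.
have l_sum := sum_reg_lagrange t; rewrite !big_ord_recr !big_ord0 /= !add0r in l_sum *.
have := lagrange_min_bound; have [t_le|t_ge] := leP t (1/3).
  have l0_le0 : reg_lagrange 0 t <= 0.
    by have := mulr3_ge0 (t + 1/3) (1/3 - t) (1 - t); rewrite /reg_lagrange /=; lra.
  have l1_ge0 : 0 <= reg_lagrange 1 t.
    by have := mulr3_ge0 (t + 1) (1/3 - t) (1 - t); rewrite /reg_lagrange /=; lra.
  have l2_ge0 : 0 <= reg_lagrange 2 t.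
    by have := mulr3_ge0 (t + 1) (t + 1/3) (1 - t); rewrite /reg_lagrange /=; lra.
  have l3_le0 : reg_lagrange 3 t <= 0.
    by have := mulr3_ge0 (t + 1) (t + 1/3) (1/3 - t); rewrite /reg_lagrange /=; lra.
  rewrite (ler0_norm l0_le0) (ger0_norm l1_ge0) (ger0_norm l2_ge0) (ler0_norm l3_le0).
  (* here the negative part is -(l_0 + l_3) = (1 - 9t^2)/8 <= 1/8 *)
  by move: l_sum; have := sqr_ge0 t; rewrite /reg_lagrange /=; lra.
have l0_ge0 : 0 <= reg_lagrange 0 t.
  by have := mulr3_ge0 (t + 1/3) (t - 1/3) (1 - t); rewrite /reg_lagrange /=; lra.
have l1_le0 : reg_lagrange 1 t <= 0.
  by have := mulr3_ge0 (t + 1) (t - 1/3) (1 - t); rewrite /reg_lagrange /=; lra.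
have l2_ge0 : 0 <= reg_lagrange 2 t.
  by have := mulr3_ge0 (t + 1) (t + 1/3) (1 - t); rewrite /reg_lagrange /=; lra.
have l3_ge0 : 0 <= reg_lagrange 3 t.
  by have := mulr3_ge0 (t + 1) (t + 1/3) (t - 1/3); rewrite /reg_lagrange /=; lra.
rewrite (ger0_norm l0_ge0) (ler0_norm l1_le0) (ger0_norm l2_ge0) (ger0_norm l3_ge0).
by have := lagrange_min_le_reg1 (t := t); lra.
Qed.

(* Its values at the nodes are the signs of the l_j(t_min). *)
Definition sign_witness (s : R) : R := Num.min 1 (9 * `|s + 1/3| - 1).

Lemma sign_witness_continuous : continuous sign_witness.
Proof.
move=> s; apply: (@continuous_min R R (fun=> 1) (fun s => 9 * `|s + 1/3| - 1) s).
  exact: cst_continuous.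
apply: continuousB; last exact: cst_continuous.
apply: continuousM; first exact: cst_continuous.
apply: (@continuous_comp R R R (fun s => s + 1/3) Num.norm s); last exact: norm_continuous.
by apply: continuousD; [exact: cvg_id | exact: cst_continuous].
Qed.

Lemma sign_witness_le1 s : `|sign_witness s| <= 1.
Proof.
rewrite /sign_witness ler_norml ge_min lexx andbT le_min.
by have := normr_ge0 (s + 1/3) => ?; apply/andP; split; lra.
Qed.

Lemma sign_witness_node k : (k <= 3)%N -> sign_witness (node k) = if k == 1%N then -1 else 1.
Proof.
have far (e : R) : 2/9 <= e \/ e <= - (2/9) -> Num.min 1 (9 * `|e| - 1) = 1.
  by move=> e_far; rewrite min_l //; case: e_far => ?; [rewrite ger0_norm | rewrite ler0_norm]; lra.
rewrite /sign_witness /node; case: k => [|[|[|[|k]]]] // _ /=; try (apply: far; lra).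
by rewrite (_ : _ - 1 + 1/3 = 0) ?normr0 ?min_r; lra.
Qed.

Lemma sign_witness_comb t :
  \sum_(j < 4) sign_witness (node j) * reg_lagrange j t = 1 - 2 * reg_lagrange 1 t.
Proof.
have := sum_reg_lagrange t; rewrite !big_ord_recr !big_ord0 /= !sign_witness_node //=.
lra.
Qed.

End RegularNodes.

Theorem mainTheorem2 (R : realType) :
  let Omega : set R := [set t : R | -1 <= t <= 1] in
  xi ((@Tcurve R) @` Omega) (fun j : 'I_4 => Tcurve (@reg_nodes R j))
  = 2 * interp_proj_norm Omega (@reg_nodes R) - 1.
Proof.
move=> Omega.
have nodes_in (j : 'I_4) : Omega (node R j) by apply: node_in; rewrite -ltnS.
have t_min_in : Omega (t_min R).
  by have /andP[? ?] := t_min_bounds R; rewrite /Omega /=; apply/andP; split; lra.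
have min_le0 : lagrange_min R <= 0 by have := lagrange_min_bound R; lra.
have min_le (j : 'I_4) t : Omega t -> lagrange_min R <= (lagr (node R) j).[t].
  by rewrite lagrange_nodeE; exact: lagrange_min_le_reg.
have min_attained : (lagr (node R) (@Ordinal 4 1 isT)).[t_min R] = lagrange_min R.
  exact: lagrange_nodeE.
have lebesgue_le t : Omega t ->
    \sum_(j < 4) `|(lagr (node R) j).[t]| <= 1 - 2 * lagrange_min R.
  by move=> t_in; under eq_bigr do rewrite lagrange_nodeE; exact: lebesgue_reg_le.
have witness_t_min : \sum_(j < 4) sign_witness (node R j) * (lagr (node R) j).[t_min R]
    = 1 - 2 * lagrange_min R.
  by under eq_bigr do rewrite lagrange_nodeE; exact: sign_witness_comb.
rewrite (xi_moment_curve (@node_inj R) min_le0 min_le t_min_in min_attained).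
rewrite (interp_proj_norm_eq (@node_inj R) nodes_in lebesgue_le
  (continuous_subspaceT (@sign_witness_continuous R)) (fun s _ => sign_witness_le1 s)
  t_min_in witness_t_min).
lra.
Qed.
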